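(* Assume the setting described in the context. For every $W\in\mathrm{Stab}_\pi$, the sequence $\varphi_W$ is strongly stable.
   Context: Setting: $\Omega$ is a finite set and $F$ a finite set of flaws, each a nonempty subset of $\Omega$; $F_\sigma=\{f:\sigma\in f\}$. For $\sigma\in\Omega$ and $f\in F_\sigma$ there is a probability distribution $\rho(\cdot\mid f,\sigma)$ with support $A(f,\sigma)$. A walk is $\sigma_1\xrightarrow{w_1}\sigma_2\cdots\xrightarrow{w_t}\sigma_{t+1}$ with $w_i\in F_{\sigma_i}$ and $\sigma_{i+1}\in A(w_i,\sigma_i)$, with word $w_1\ldots w_t$. $\sim$ is a symmetric relation on $F$ (loops allowed), with $\Gamma(f)=\{g:f\sim g\}$, $\Gamma^+(f)=\Gamma(f)\cup\{f\}$ and unions over sets $\Gamma(S)$, $\Gamma^+(S)$. It is assumed that $(F,\sim)$ is a potential causality graph: for every step $\sigma\xrightarrow{f}\sigma'$, $F_{\sigma'}\subseteq(F_\sigma\setminus\{f\})\cup\Gamma(f)$. $S$ is independent if $f\not\sim g$ for distinct $f,g\in S$; $\mathrm{Ind}(F)$ is the family of independent sets. A sequence $(I_1,\ldots,I_s)$, $s\ge1$, is stable if $I_r\in\mathrm{Ind}(F)$ and $I_{r+1}\subseteq\Gamma^+(I_r)$. A word $W$ is stable if $W=W_1\ldots W_s$ (a unique partition) with nonempty words $W_r$ of distinct flaws whose flaw sets $I_r$ form a stable sequence. Then $\varphi_W=(I_1,\ldots,I_s)$, and $\varphi_W=(\varnothing)$ for the empty word. $W$ is $\pi$-stable if in addition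 each $W_r$ is strictly increasing in the order induced by a permutation $\pi$ of $F$. $\mathrm{Stab}_\pi$ is the set of $\pi$-stable words $W$ such that some walk has word $W$ or the reverse of $W$. A sequence $(I_1,\ldots,I_s)$ with $s\ge1$ is strongly stable if $I_r\in\mathrm{Ind}(F)$ for all $r$, $I_{r+1}\subseteq\Gamma(I_r)$ for $r\in[s-1]$, and $I_r\ne\varnothing$ for $r\in[2,s]$. *)

From mathcomp Require Import all_boot all_order all_algebra.
Set Implicit Arguments. Unset Strict Implicit. Unset Printing Implicit Defensive.
Import GRing.Theory Num.Theory.

Section FlawsSetting.
Variables (R : realFieldType) (Omega Fl : finType).
Variable fl : Fl -> {set Omega}.
Variable rho : Fl -> Omega -> Omega -> R. (* rho f sigma sigma' = rho(sigma' | f, sigma) *)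
Variable sim : rel Fl.

Definition Fat (s : Omega) : {set Fl} := [set f | s \in fl f].

Definition Aset (f : Fl) (s : Omega) : {set Omega} := [set s' | rho f s s' != 0%R].

Definition is_distribution : Prop :=
  forall f s, s \in fl f ->
    (forall s', (0 <= rho f s s')%R) /\ (\sum_(s' : Omega) rho f s s' = 1)%R.

Definition Gam (f : Fl) : {set Fl} := [set g | sim f g].
Definition GamPlus (f : Fl) : {set Fl} := f |: Gam f.
Definition GamS (S : {set Fl}) : {set Fl} := \bigcup_(f in S) Gam f.
Definition GamPlusS (S : {set Fl}) : {set Fl} := GamS S :|: S.

Definition potential_causality : Prop :=
  forall s f s', f \in Fat s -> s' \in Aset f s ->
    Fat s' \subset (Fat s :\ f) :|: Gam f.

Definition indep (S : {set Fl}) : Prop :=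
  forall f g, f \in S -> g \in S -> f != g -> ~~ sim f g.

Definition stable_seq (Is : seq {set Fl}) : Prop :=
  [/\ (0 < size Is)%N,
      (forall I, I \in Is -> indep I) &
      (forall r, (r.+1 < size Is)%N -> nth set0 Is r.+1 \subset GamPlusS (nth set0 Is r))].

Definition strongly_stable (Is : seq {set Fl}) : Prop :=
  [/\ (0 < size Is)%N,
      (forall I, I \in Is -> indep I),
      (forall r, (r.+1 < size Is)%N -> nth set0 Is r.+1 \subset GamS (nth set0 Is r)) &
      (forall r, (0 < r)%N -> (r < size Is)%N -> nth set0 Is r != set0)].

Fixpoint walk_from (s : Omega) (W : seq Fl) : bool :=
  match W with
  | [::] => true
  | f :: W' => (f \in Fat s) && [exists s' : Omega, (s' \in Aset f s) && walk_from s' W']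
  end.

Definition has_walk (W : seq Fl) : Prop := exists s : Omega, walk_from s W.

Definition block_set (b : seq Fl) : {set Fl} := [set x in b].

(* phi of a partition W = W_1 ... W_s; the empty word (empty partition) gives (emptyset) *)
Definition phi_of (Ws : seq (seq Fl)) : seq {set Fl} :=
  if Ws is [::] then [:: set0] else map block_set Ws.

(* the permutation pi of F, given as the rank of each flaw; induced order *)
Definition pi_lt (pi : Fl -> 'I_#|Fl|) (x y : Fl) : bool := (pi x < pi y)%N.

Definition pi_stable_partition (pi : Fl -> 'I_#|Fl|) (W : seq Fl) (Ws : seq (seq Fl)) : Prop :=
  [/\ flatten Ws = W,
      (forall b, b \in Ws -> [/\ b != [::], uniq b & sorted (pi_lt pi) b]) &
      stable_seq (phi_of Ws)].

Definition pi_stable (pi : Fl -> 'I_#|Fl|) (W : seq Fl) : Prop :=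
  exists Ws, pi_stable_partition pi W Ws.

Definition in_Stab (pi : Fl -> 'I_#|Fl|) (W : seq Fl) : Prop :=
  pi_stable pi W /\ (has_walk W \/ has_walk (rev W)).

End FlawsSetting.

(** A flaw [g] can only reappear in a walk after some later step introduces it,
    i.e. after a flaw [h] with [h ~ g] has been addressed.  If [g] lay in two
    consecutive blocks [I_r] and [I_(r+1)] of a stable word without lying in
    [Γ(I_r)], then addressing [g] in [W_r] removes it (as [g] is not [~ g]) and
    no flaw read before its occurrence in [W_(r+1)] can bring it back: those
    flaws are in [I_r], which misses [Γ^-1(g)], or in the independent set
    [I_(r+1)].  Reading the walk backwards handles the reversed word.  Hence
    [I_(r+1) ⊆ Γ(I_r)]; nonemptiness of the blocks is built into the partition. *)
From mathcomp Require Import all_boot all_order all_algebra.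
Set Implicit Arguments. Unset Strict Implicit. Unset Printing Implicit Defensive.

Section Walks.
Variables (R : realFieldType) (Omega Fl : finType).
Variables (fl : Fl -> {set Omega}) (rho : Fl -> Omega -> Omega -> R) (sim : rel Fl).
Hypothesis causality : potential_causality fl rho sim.

Local Notation walk_from := (walk_from fl rho).
Local Notation Fat := (Fat fl).

Lemma walk_from_catr s P Q : walk_from s (P ++ Q) -> exists s', walk_from s' Q.
Proof.
elim: P s => [|f P IH] s /=; first by exists s.
by case/andP=> _ /existsP [s' /andP [_ /IH]].
Qed.

Lemma notin_Fat_step f g s s' : f \in Fat s -> s' \in Aset rho f s ->
  g \notin Fat s :\ f -> ~~ sim f g -> g \notin Fat s'.
Proof.
move=> fs s's gs nfg; apply/negP=> /(subsetP (causality fs s's)).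
by rewrite in_setU (negbTE gs) /Gam inE (negbTE nfg).
Qed.

Lemma walk_from_notin g s Q T : walk_from s (Q ++ T) -> g \notin Fat s ->
  {in Q, forall h, ~~ sim h g} -> g \notin Q.
Proof.
elim: Q s => [|h Q IH] s //= /andP [hs /existsP [s' /andP [s's w]]] gs nQg.
have nhg : ~~ sim h g by apply: nQg; apply: mem_head.
rewrite in_cons negb_or; apply/andP; split.
  by apply: contraNneq gs => ->.
apply: (IH s' w); last by move=> x xQ; apply: nQg; rewrite in_cons xQ orbT.
by apply: notin_Fat_step hs s's _ nhg; rewrite in_setD1 negb_and gs orbT.
Qed.

Lemma walk_from_no_return g s Q T : walk_from s (g :: Q ++ T) -> ~~ sim g g ->
  {in Q, forall h, ~~ sim h g} -> g \notin Q.
Proof.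
move=> /= /andP [gs /existsP [s' /andP [s's w]]] ngg; apply: walk_from_notin w _.
by apply: notin_Fat_step gs s's _ ngg; rewrite in_setD1 eqxx.
Qed.

Lemma has_walk_consecutive_blocks g P b1 b2 T : has_walk fl rho (P ++ b1 ++ b2 ++ T) ->
  g \in b1 -> g \in b2 -> exists2 h, h \in b1 ++ b2 & sim h g.
Proof.
move=> [s w] gb1 gb2; case/splitPr: gb1 w => x y w.
apply/exists_inP; apply: contraTT gb2 => /exists_inPn nsim.
have ngg : ~~ sim g g by apply: nsim; rewrite !mem_cat in_cons eqxx !orbT.
have nsim_yb2 : {in y ++ b2, forall h, ~~ sim h g}.
  by move=> h; rewrite mem_cat => /orP [hy|hb2]; apply: nsim;
    rewrite !mem_cat ?in_cons ?hy ?hb2 ?orbT.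
have [s' w'] : exists s', walk_from s' (g :: (y ++ b2) ++ T).
  by apply: (walk_from_catr (P := P ++ x)); move: w; rewrite -!catA; apply.
by have := walk_from_no_return w' ngg nsim_yb2; rewrite mem_cat negb_or => /andP [_ ->].
Qed.

Lemma consecutive_blocks_subset P b1 b2 T :
  has_walk fl rho (P ++ b1 ++ b2 ++ T) \/ has_walk fl rho (rev (P ++ b1 ++ b2 ++ T)) ->
  indep sim (block_set b2) -> block_set b2 \subset GamPlusS sim (block_set b1) ->
  block_set b2 \subset GamS sim (block_set b1).
Proof.
move=> walk ind2 sub12; apply/subsetP=> g gb2.
have /setUP [//|] := subsetP sub12 g gb2; rewrite !inE in gb2 * => gb1.
have [h hb sim_hg] : exists2 h, h \in b1 ++ b2 & sim h g.
  case: walk => [w|]; first exact: has_walk_consecutive_blocks w gb1 gb2.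
  rewrite !rev_cat -!catA => w.
  rewrite -mem_rev in gb1; rewrite -mem_rev in gb2.
  have [h hb sim_hg] := has_walk_consecutive_blocks w gb2 gb1.
  by exists h => //; move: hb; rewrite !mem_cat !mem_rev orbC.
move: hb; rewrite mem_cat => /orP [hb1|hb2].
  by apply/bigcupP; exists h; rewrite ?inE.
have Ehg : h = g by apply: contraTeq sim_hg => nhg; apply: ind2; rewrite ?inE.
by subst h; apply/bigcupP; exists g; rewrite ?inE.
Qed.

End Walks.

Lemma flatten_nth2 (T : Type) (x0 : seq T) (Ws : seq (seq T)) r : (r.+1 < size Ws)%N ->
  flatten Ws = flatten (take r Ws) ++ nth x0 Ws r ++ nth x0 Ws r.+1 ++ flatten (drop r.+2 Ws).
Proof.
move=> lt_r1; have lt_r := ltnW lt_r1.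
by rewrite -{1}(cat_take_drop r Ws) flatten_cat (drop_nth x0 lt_r) (drop_nth x0 lt_r1).
Qed.

Lemma block_set_neq0 (T : finType) (b : seq T) : b != [::] -> block_set b != set0.
Proof. by case: b => // a b _; apply/set0Pn; exists a; rewrite inE mem_head. Qed.

Theorem proposition9 (R : realFieldType) (Omega Fl : finType)
  (fl : Fl -> {set Omega}) (rho : Fl -> Omega -> Omega -> R) (sim : rel Fl)
  (pi : Fl -> 'I_#|Fl|) :
  injective fl ->
  (forall f, fl f != set0) ->
  is_distribution fl rho ->
  (forall f g, sim f g = sim g f) ->
  potential_causality fl rho sim ->
  injective pi ->
  forall W : seq Fl, in_Stab fl rho sim pi W ->
  forall Ws : seq (seq Fl), pi_stable_partition sim pi W Ws ->
  strongly_stable sim (phi_of Ws).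
Proof.
move=> _ _ _ _ causality _ W [_ walk] Ws [EW blocks [size_gt0 ind sub]].
case: Ws EW blocks size_gt0 ind sub => [|b Ws'] EW blocks size_gt0 ind sub.
  by split=> // -[|[]].
rewrite /phi_of -/(map _ (b :: Ws')) in size_gt0 ind sub *.
set Ws := b :: Ws' in EW blocks size_gt0 ind sub *.
split=> // r; rewrite size_map => lt_r.
  have lt_r0 := ltnW lt_r.
  move: (sub r); rewrite size_map !(nth_map [::]) // => /(_ lt_r).
  apply: (consecutive_blocks_subset (P := flatten (take r Ws))
                                    (T := flatten (drop r.+2 Ws)) causality).
    by rewrite -flatten_nth2 // EW.
  by apply: ind; rewrite -(nth_map [::] set0) // mem_nth ?size_map.
move=> lt_rs; rewrite (nth_map [::]) //; apply: block_set_neq0.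
by have [] := blocks _ (mem_nth [::] lt_rs).
Qed.
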